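(* Let $m_1 \leq n_1$, $m_2 \leq n_2$, $m_3 \leq n_3$ be natural numbers. Then the minimal typical subrank of real $n_1\times n_2\times n_3$ tensors is at least the minimal typical subrank of real $m_1 \times m_2 \times m_3$ tensors.
   Context: For $r \geq 0$ let $I_r := \sum_{j=1}^r e_j \otimes e_j \otimes e_j$. The subrank of $T \in \mathbb{R}^{n_1} \otimes \mathbb{R}^{n_2} \otimes \mathbb{R}^{n_3}$ is $Q(T) := \max\{ r \mid \exists\ \mathbb{R}\text{-linear } \varphi_i : \mathbb{R}^{n_i} \to \mathbb{R}^r,\ (\varphi_1 \otimes \varphi_2 \otimes \varphi_3) T = I_r\}$. An integer $r$ is a typical subrank of the format $n_1\times n_2\times n_3$ if $\{T \mid Q(T) = r\}$ contains a nonempty Euclidean-open subset of $\mathbb{R}^{n_1} \otimes \mathbb{R}^{n_2} \otimes \mathbb{R}^{n_3}$. *)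

From HB Require Import structures.
From mathcomp Require Import all_boot all_order all_algebra.
From mathcomp Require Import reals.
Set Implicit Arguments. Unset Strict Implicit. Unset Printing Implicit Defensive.
Import Order.TTheory GRing.Theory Num.Theory.
Local Open Scope ring_scope.

(* Real tensors in R^{n1} (x) R^{n2} (x) R^{n3}, as coordinate arrays
   w.r.t. the standard basis e_i (x) e_j (x) e_k. *)
Definition tensor (R : realType) (n1 n2 n3 : nat) :=
  'I_n1 -> 'I_n2 -> 'I_n3 -> R.

(* (phi1 (x) phi2 (x) phi3) T, for linear maps phi_i : R^{n_i} -> R^r given
   by their r x n_i matrices. *)
Definition tensor_apply (R : realType) (n1 n2 n3 r : nat)
  (A : 'M[R]_(r, n1)) (B : 'M[R]_(r, n2)) (C : 'M[R]_(r, n3))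
  (T : tensor R n1 n2 n3) : tensor R r r r :=
  fun a b c => \sum_(i < n1) \sum_(j < n2) \sum_(k < n3)
                 A a i * B b j * C c k * T i j k.

Definition unit_tensor (R : realType) (r : nat) : tensor R r r r :=
  fun a b c => if (a == b) && (b == c) then 1 else 0.

Definition restricts_to_unit (R : realType) (n1 n2 n3 : nat)
  (T : tensor R n1 n2 n3) (r : nat) : Prop :=
  exists (A : 'M[R]_(r, n1)) (B : 'M[R]_(r, n2)) (C : 'M[R]_(r, n3)),
    forall a b c, tensor_apply A B C T a b c = @unit_tensor R r a b c.

Definition subrank_eq (R : realType) (n1 n2 n3 : nat)
  (T : tensor R n1 n2 n3) (r : nat) : Prop :=
  @restricts_to_unit R n1 n2 n3 T r /\ (forall r', @restricts_to_unit R n1 n2 n3 T r' -> (r' <= r)%N).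

(* Euclidean-open subsets of the tensor space (using the max-norm on
   coordinates, which induces the Euclidean topology). *)
Definition tensor_open (R : realType) (n1 n2 n3 : nat)
  (U : tensor R n1 n2 n3 -> Prop) : Prop :=
  forall T, U T -> exists e : R, 0 < e /\
    forall T' : tensor R n1 n2 n3,
      (forall i j k, `|T' i j k - T i j k| < e) -> U T'.

Definition typical_subrank (R : realType) (n1 n2 n3 r : nat) : Prop :=
  exists U : tensor R n1 n2 n3 -> Prop,
    [/\ tensor_open U, (exists T, U T) & forall T, U T -> @subrank_eq R n1 n2 n3 T r].

Definition min_typical_subrank (R : realType) (n1 n2 n3 r : nat) : Prop :=
  typical_subrank R n1 n2 n3 r /\
  (forall r', typical_subrank R n1 n2 n3 r' -> (r <= r')%N).

From HB Require Import structures.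
From mathcomp Require Import all_boot all_order all_algebra.
From mathcomp Require Import reals boolp classical_sets topology normedtype.
From mathcomp Require Import ordered_qelim qe_rcf.
Set Implicit Arguments. Unset Strict Implicit. Unset Printing Implicit Defensive.
Import Order.TTheory GRing.Theory Num.Theory.
Import numFieldNormedType.Exports ArrowAsUniformType.
Local Open Scope ring_scope.
Local Open Scope classical_set_scope.

(* Let U be a nonempty open set of n1 x n2 x n3 tensors of subrank rn. Every
   m1 x m2 x m3 tensor close enough to the corner of some T0 in U is the corner
   of a tensor of U, and restrictions of a corner are restrictions of the whole
   tensor, so the subrank is at most rn on a nonempty open set B of small
   tensors. For each r, "S restricts to I_r" is a first-order formula in the
   entries of S; by quantifier elimination it is a boolean combination of
   polynomial sign conditions, hence constant on a nonempty open subset of any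
   nonempty open set. Shrinking B once for each r <= rn yields a nonempty open
   set on which the subrank is constant, i.e. a typical subrank k <= rn. *)

Section GenericallyConstant.
Variable X : topologicalType.

Definition constant_on (V : set X) (p : X -> bool) :=
  exists b, forall x, V x -> p x = b.

Definition generically_constant (p : X -> bool) :=
  forall W, open W -> W !=set0 ->
  exists V, [/\ open V, V !=set0, V `<=` W & constant_on V p].

Lemma generically_constant_open (A : set X) :
  open A -> generically_constant (fun x => `[< A x >]).
Proof.
move=> oA W oW [x Wx]; have [[y [Wy Ay]]|WA] := pselect (W `&` A !=set0).
  exists (W `&` A); split; [exact: openI | by exists y | by move=> ? [] |].
  by exists true => z [_ Az]; apply/asboolP.
exists W; split => //; first by exists x.
by exists false => z Wz; apply/asboolP => Az; apply: WA; exists z.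
Qed.

Lemma generically_constant_ext p q :
  p =1 q -> generically_constant p -> generically_constant q.
Proof.
move=> pq gp W oW W0; have [V [oV V0 VW [b hb]]] := gp W oW W0.
by exists V; split => //; exists b => x Vx; rewrite -pq hb.
Qed.

Lemma generically_constant_cst b : generically_constant (fun=> b).
Proof. by move=> W oW W0; exists W; split => //; exists b. Qed.

Lemma generically_constant_map (op : bool -> bool) p :
  generically_constant p -> generically_constant (op \o p).
Proof.
move=> gp W oW W0; have [V [oV V0 VW [b hb]]] := gp W oW W0.
by exists V; split => //; exists (op b) => x /hb /= ->.
Qed.

Lemma generically_constant_map2 (op : bool -> bool -> bool) p q :
  generically_constant p -> generically_constant q ->
  generically_constant (fun x => op (p x) (q x)).
Proof.
move=> gp gq W oW W0; have [V [oV V0 VW [b hb]]] := gp W oW W0.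
have [V' [oV' V'0 V'V [b' hb']]] := gq V oV V0.
exists V'; split => //; first exact: subset_trans VW.
by exists (op b b') => x V'x; rewrite hb ?hb' //; apply: V'V.
Qed.

Lemma generically_constant_family (p : nat -> X -> bool) n :
  (forall r, generically_constant (p r)) ->
  forall W, open W -> W !=set0 -> exists V,
    [/\ open V, V !=set0, V `<=` W & forall r, (r < n)%N -> constant_on V (p r)].
Proof.
move=> gp; elim: n => [|n IH] W oW W0; first by exists W; split.
have [V [oV V0 VW cV]] := IH W oW W0.
have [V' [oV' V'0 V'V [b hb]]] := gp n V oV V0.
exists V'; split => //; first exact: subset_trans VW.
move=> r; rewrite ltnS leq_eqVlt => /predU1P[->|rn]; first by exists b.
by have [b' hb'] := cV r rn; exists b' => x /V'V /hb'.
Qed.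

End GenericallyConstant.

Section SemialgebraicPredicates.
Variables (X : topologicalType) (R : realType).

Lemma generically_constant_preimage (f : X -> R) (A : set R) :
  continuous f -> open A -> generically_constant (fun x => `[< A (f x) >]).
Proof. by move=> /continuousP cf oA; exact: generically_constant_open (cf A oA). Qed.

Lemma continuous_exprn (f : X -> R) n :
  continuous f -> continuous (fun x => f x ^+ n).
Proof.
move=> cf; elim: n => [|n IH] x; first exact: cst_continuous.
have -> : (fun x => f x ^+ n.+1) = f \* (fun x => f x ^+ n).
  by apply: funext => y; rewrite /= exprS.
exact: (continuousM (cf x) (IH x)).
Qed.

Variable env : X -> seq R.
Hypothesis continuous_env : forall i, continuous (fun x => nth 0 (env x) i).

Lemma continuous_eval t :
  GRing.rterm t -> continuous (fun x => GRing.eval (env x) t).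
Proof.
elim: t => //= [c _|n _|t1 IH1 t2 IH2 /andP[r1 r2]|t IH r|t IH n r
  |t1 IH1 t2 IH2 /andP[r1 r2]|t IH n r] x.
- exact: cst_continuous.
- exact: cst_continuous.
- exact: continuousD (IH1 r1 x) (IH2 r2 x).
- exact: continuousN (IH r x).
- exact: cvgMn (IH r x).
- exact: continuousM (IH1 r1 x) (IH2 r2 x).
- exact: continuous_exprn (IH r) x.
Qed.

Lemma generically_constant_qf_eval f :
  ord.qf_form f -> ord.rformula f ->
  generically_constant (fun x => ord.qf_eval (env x) f).
Proof.
have cB t1 t2 : GRing.rterm t1 -> GRing.rterm t2 ->
    continuous (fun x => GRing.eval (env x) t1 - GRing.eval (env x) t2).
  by move=> r1 r2 x; apply: continuousB; apply: continuous_eval.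
elim: f => //= [b _ _|t1 t2 _ /andP[r1 r2]|t1 t2 _ /andP[r1 r2]
  |t1 t2 _ /andP[r1 r2]|f1 IH1 f2 IH2|f1 IH1 f2 IH2|f1 IH1 f2 IH2|f IH].
- exact: generically_constant_cst.
- apply: generically_constant_ext (generically_constant_map negb
    (generically_constant_preimage (cB _ _ r1 r2) (@open_neq R 0))) => x /=.
  by rewrite asboolb subr_eq0 negbK.
- apply: generically_constant_ext
    (generically_constant_preimage (cB _ _ r2 r1) (@open_gt R 0)) => x /=.
  by rewrite asboolb subr_gt0.
- apply: generically_constant_ext (generically_constant_map negb
    (generically_constant_preimage (cB _ _ r1 r2) (@open_gt R 0))) => x /=.
  by rewrite asboolb subr_gt0 -leNgt.
1-3: by move=> /andP[q1 q2] /andP[r1 r2]; apply: generically_constant_map2; auto.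
by move=> q r; apply: generically_constant_map (IH q r).
Qed.

Lemma generically_constant_holds f :
  generically_constant (fun x => `[< ord.holds (env x) f >]).
Proof.
have /andP[qf rf] :=
  ord.quantifier_elim_wf (@wf_QE_wproj R) (ord.to_rform_rformula f).
apply: generically_constant_ext (generically_constant_qf_eval qf rf) => x.
change (rcf_sat (env x) f = `[< ord.holds (env x) f >]).
by case: rcf_satP => [/asboolT|/asboolF] ->.
Qed.

End SemialgebraicPredicates.

Section FormulaSemantics.
Variable R : realDomainType.

Lemma holds_foldr_Exists (f : ord.formula R) (vs : seq nat) (e : seq R) :
  ord.holds e (foldr ord.Exists f vs) <->
  exists e', (forall i, i \notin vs -> nth 0 e' i = nth 0 e i) /\ ord.holds e' f.
Proof.
elim: vs e => [|i vs IH] e /=.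
  split=> [|[e' [agree fe']]]; first by exists e.
  by apply: ord.eq_holds fe' => j; apply: agree.
split=> [[x /IH[e' [agree fe']]]|[e' [agree fe']]].
  exists e'; split => // j; rewrite in_cons negb_or => /andP[ji jvs].
  by rewrite agree // nth_set_nth /= (negbTE ji).
exists (nth 0 e' i); apply/IH; exists e'; split => // j jvs.
rewrite nth_set_nth /=; case: eqP => [->//|/eqP ji].
by apply: agree; rewrite in_cons negb_or ji.
Qed.

Lemma holds_big_And (I : eqType) (s : seq I) (F : I -> ord.formula R) e :
  ord.holds e (\big[ord.And/ord.True]_(x <- s) F x) <->
  forall x, x \in s -> ord.holds e (F x).
Proof.
elim: s => [|y s IH]; first by rewrite big_nil.
rewrite big_cons /= IH; split=> [[Fy Fs] x|Fs].
  by rewrite in_cons => /predU1P[->|]; last exact: Fs.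
by split=> [|x xs]; apply: Fs; rewrite ?mem_head // in_cons xs orbT.
Qed.

End FormulaSemantics.

HB.instance Definition _ (R : realType) n1 n2 n3 :=
  PseudoMetric.copy (tensor R n1 n2 n3) ('I_n1 -> 'I_n2 -> 'I_n3 -> R).

Lemma tensor_openE (R : realType) n1 n2 n3 (U : set (tensor R n1 n2 n3)) :
  tensor_open U <-> open U.
Proof.
rewrite openE /interior; split=> oU T UT.
  have [e [e0 he]] := oU T UT; apply/nbhs_ballP; exists e => // T' TT'.
  by apply: he => i j k; rewrite distrC; apply: TT'.
have /nbhs_ballP[e e0 he] := oU T UT; exists e; split => // T' TT'.
by apply: he => i j k; rewrite /ball /= distrC; apply: TT'.
Qed.

Lemma continuous_tensor_entry (R : realType) n1 n2 n3 i j k :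
  continuous (fun T : tensor R n1 n2 n3 => T i j k).
Proof.
move=> T A /nbhs_ballP[e e0 he]; apply/nbhs_ballP; exists e => // T' TT'.
exact: he (TT' i j k).
Qed.

(* The formula "exists A B C, (A (x) B (x) C) T = I_r": variable number
   [enum_rank v] stands for the entry [v] of T, A, B or C, and only the entries
   of A, B and C are quantified. *)
Section RestrictionFormula.
Variables (R : realType) (n1 n2 n3 r : nat).

Definition mx_entry : finType :=
  ('I_r * 'I_n1 + 'I_r * 'I_n2 + 'I_r * 'I_n3)%type.
Definition formula_var : finType := ('I_n1 * 'I_n2 * 'I_n3 + mx_entry)%type.

Definition mx_entry_indices : seq nat :=
  [seq enum_rank (inr u : formula_var) : nat | u <- enum mx_entry].

Definition var (v : formula_var) : GRing.term R := GRing.Var _ (enum_rank v).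
Definition varT i j k := var (inl (i, j, k)).
Definition varA a i := var (inr (inl (inl (a, i)))).
Definition varB b j := var (inr (inl (inr (b, j)))).
Definition varC c k := var (inr (inr (c, k))).

Definition restriction_term (a b c : 'I_r) : GRing.term R :=
  \big[GRing.Add/GRing.Const 0]_(i < n1) \big[GRing.Add/GRing.Const 0]_(j < n2)
   \big[GRing.Add/GRing.Const 0]_(k < n3)
    GRing.Mul (GRing.Mul (GRing.Mul (varA a i) (varB b j)) (varC c k)) (varT i j k).

Definition restriction_formula : ord.formula R :=
  foldr ord.Exists
    (\big[ord.And/ord.True]_(t : 'I_r * 'I_r * 'I_r)
       ord.Equal (restriction_term t.1.1 t.1.2 t.2)
                 (GRing.Const (@unit_tensor R r t.1.1 t.1.2 t.2)))
    mx_entry_indices.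

Definition env_of (g : formula_var -> R) : seq R :=
  [seq g v | v <- enum formula_var].

Definition tensor_env (T : tensor R n1 n2 n3) : seq R :=
  env_of (fun v => if v is inl (i, j, k) then T i j k else 0).

Lemma nth_env_of g v : nth 0 (env_of g) (enum_rank v) = g v.
Proof. by rewrite (nth_map v) ?nth_enum_rank // -cardE ltn_ord. Qed.

Lemma nth_env_of_default g i :
  (#|formula_var| <= i)%N -> nth 0 (env_of g) i = 0.
Proof. by move=> le_i; rewrite nth_default // size_map -cardE. Qed.

Lemma mem_mx_entry_indices (v : formula_var) :
  (enum_rank v : nat) \in mx_entry_indices = if v is inr _ then true else false.
Proof.
apply/mapP; case: v => [t|u]; last by exists u; rewrite ?mem_enum.
by case=> u _ /ord_inj/enum_rank_inj.
Qed.

Lemma eval_restriction_term e a b c :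
  GRing.eval e (restriction_term a b c) =
  \sum_(i < n1) \sum_(j < n2) \sum_(k < n3)
    GRing.eval e (varA a i) * GRing.eval e (varB b j) *
    GRing.eval e (varC c k) * GRing.eval e (varT i j k).
Proof.
rewrite (big_morph (GRing.eval e) (id1 := 0) (op1 := +%R)) //.
apply: eq_bigr => i _; rewrite (big_morph (GRing.eval e) (id1 := 0) (op1 := +%R)) //.
by apply: eq_bigr => j _; rewrite (big_morph (GRing.eval e) (id1 := 0) (op1 := +%R)).
Qed.

Lemma restriction_formulaP T :
  ord.holds (tensor_env T) restriction_formula <-> restricts_to_unit T r.
Proof.
rewrite holds_foldr_Exists; split=> [[e [agree /holds_big_And sol]]|[A [B [C ABC]]]].
  pose entry (x : GRing.term R) := GRing.eval e x.
  exists (\matrix_(a, i) entry (varA a i)), (\matrix_(b, j) entry (varB b j)),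
         (\matrix_(c, k) entry (varC c k)) => a b c.
  have /= := sol (a, b, c) (mem_index_enum _); rewrite eval_restriction_term => <-.
  apply: eq_bigr => i _; apply: eq_bigr => j _; apply: eq_bigr => k _.
  rewrite !mxE /entry /= [e`_(enum_rank (inl _))]agree ?mem_mx_entry_indices //.
  by rewrite nth_env_of.
pose g (v : formula_var) := match v with
  | inl (i, j, k) => T i j k
  | inr (inl (inl (a, i))) => A a i
  | inr (inl (inr (b, j))) => B b j
  | inr (inr (c, k)) => C c k end.
exists (env_of g); split=> [i|].
  have [lt_i|le_i] := ltnP i #|formula_var|; last by rewrite !nth_env_of_default.
  have -> : i = enum_rank (enum_val (Ordinal lt_i)) by rewrite enum_valK.
  by rewrite mem_mx_entry_indices !nth_env_of; case: enum_val => [[[]]|].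
apply/holds_big_And => -[[a b] c] _ /=; rewrite eval_restriction_term -ABC.
apply: eq_bigr => i _; apply: eq_bigr => j _; apply: eq_bigr => k _.
by rewrite /= !nth_env_of.
Qed.

Lemma continuous_tensor_env i :
  continuous (fun T : tensor R n1 n2 n3 => nth 0 (tensor_env T) i).
Proof.
have [lt_i|le_i] := ltnP i #|formula_var|; last first.
  under [fun T => _]funext do rewrite nth_env_of_default //.
  exact: cst_continuous.
have -> : i = enum_rank (enum_val (Ordinal lt_i)) by rewrite enum_valK.
under [fun T => _]funext do rewrite nth_env_of.
case: enum_val => [[[i' j] k]|u];
  [exact: continuous_tensor_entry | exact: cst_continuous].
Qed.

Lemma generically_constant_restricts :
  generically_constant (fun T : tensor R n1 n2 n3 => `[< restricts_to_unit T r >]).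
Proof.
apply: generically_constant_ext (generically_constant_holds continuous_tensor_env
  restriction_formula) => T.
exact: asbool_equiv_eq (restriction_formulaP T).
Qed.

End RestrictionFormula.

Lemma restricts_to_unit0 (R : realType) n1 n2 n3 (T : tensor R n1 n2 n3) :
  restricts_to_unit T 0.
Proof. by exists 0, 0, 0 => -[]. Qed.

Lemma exists_typical_subrank_le (R : realType) n1 n2 n3 N
    (U : set (tensor R n1 n2 n3)) :
  open U -> U !=set0 ->
  (forall T r, U T -> restricts_to_unit T r -> (r <= N)%N) ->
  exists2 k, typical_subrank R n1 n2 n3 k & (k <= N)%N.
Proof.
move=> oU U0 subrank_le.
have [V [oV [S0 VS0] VU cV]] := generically_constant_family N.+1
  (@generically_constant_restricts R n1 n2 n3) oU U0.
have S0_le r : `[< restricts_to_unit S0 r >] -> (r <= N)%N.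
  by move/asboolP; apply: subrank_le (VU _ VS0).
have S0_0 : exists r, `[< restricts_to_unit S0 r >].
  by exists 0%N; apply/asboolP/restricts_to_unit0.
have [k /asboolP S0k k_max] := ex_maxnP S0_0 S0_le.
have same_restrictions S r : V S -> (r <= N)%N ->
    restricts_to_unit S r <-> restricts_to_unit S0 r.
  move=> VS le_rN; have [b eq_b] := cV r le_rN.
  by apply: asbool_eq_equiv; rewrite !eq_b.
exists k; last exact/S0_le/asboolP.
exists V; split; [exact/tensor_openE | by exists S0 |] => S VS; split.
  exact/(same_restrictions S k VS (S0_le k (asboolT S0k))).
move=> r' Sr'; have le_r'N := subrank_le S r' (VU _ VS) Sr'.
exact/k_max/asboolP/(same_restrictions S r' VS le_r'N).
Qed.

Definition pad_mx (R : nmodType) r m n (A : 'M[R]_(r, m)) : 'M[R]_(r, n) :=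
  \matrix_(a, i) oapp (A a) 0 (insub (i : nat)).

Lemma pad_mx_widen (R : nmodType) r m n (le_mn : (m <= n)%N)
    (A : 'M[R]_(r, m)) a i :
  pad_mx n A a (widen_ord le_mn i) = A a i.
Proof. by rewrite mxE /= valK. Qed.

Lemma pad_mx_out (R : nmodType) r m n (A : 'M[R]_(r, m)) a (i : 'I_n) :
  (m <= i)%N -> pad_mx n A a i = 0.
Proof. by move=> le_mi; rewrite mxE insubN // -leqNgt. Qed.

Lemma sum_widen_ord (V : nmodType) m n (le_mn : (m <= n)%N) (F : 'I_n -> V) :
  (forall i : 'I_n, (m <= i)%N -> F i = 0) ->
  \sum_(i < n) F i = \sum_(i < m) F (widen_ord le_mn i).
Proof.
move=> F0; rewrite -(big_ord_narrow le_mn) [RHS]big_mkcond /=.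
by apply: eq_bigr => i _; case: ltnP => // /F0.
Qed.

Section Corner.
Variables (R : realType) (m1 m2 m3 n1 n2 n3 : nat).
Hypotheses (le_m1n1 : (m1 <= n1)%N) (le_m2n2 : (m2 <= n2)%N) (le_m3n3 : (m3 <= n3)%N).

Definition corner (T : tensor R n1 n2 n3) : tensor R m1 m2 m3 :=
  fun i j k => T (widen_ord le_m1n1 i) (widen_ord le_m2n2 j) (widen_ord le_m3n3 k).

Definition replace_corner (T : tensor R n1 n2 n3) (S : tensor R m1 m2 m3) :
    tensor R n1 n2 n3 := fun i j k =>
  match insub (i : nat), insub (j : nat), insub (k : nat) with
  | Some i', Some j', Some k' => S i' j' k'
  | _, _, _ => T i j k
  end.

Lemma corner_replace T S : corner (replace_corner T S) = S.
Proof.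
apply: funext => i; apply: funext => j; apply: funext => k.
by rewrite /corner /replace_corner /= !valK.
Qed.

Lemma replace_corner_corner T : replace_corner T (corner T) = T.
Proof.
apply: funext => i; apply: funext => j; apply: funext => k; rewrite /replace_corner.
case: insubP => // i' _ vi; case: insubP => // j' _ vj; case: insubP => // k' _ vk.
by rewrite /corner; congr T; apply: val_inj; rewrite /= ?vi ?vj ?vk.
Qed.

Lemma continuous_replace_corner T : continuous (replace_corner T).
Proof.
move=> S A /nbhs_ballP[e e0 he]; apply/nbhs_ballP; exists e => // S' SS'.
apply: he => i j k; rewrite /replace_corner.
case: (insubP 'I_m1 i) => [i' _ _|_]; case: (insubP 'I_m2 j) => [j' _ _|_];
  case: (insubP 'I_m3 k) => [k' _ _|_]; by [apply: SS' | apply: ballxx].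
Qed.

(* Padding the restriction matrices of the corner by zero columns. *)
Lemma restricts_to_unit_corner T r :
  restricts_to_unit (corner T) r -> restricts_to_unit T r.
Proof.
move=> [A [B [C ABC]]]; exists (pad_mx n1 A), (pad_mx n2 B), (pad_mx n3 C).
move=> a b c; rewrite -ABC /tensor_apply (sum_widen_ord le_m1n1); last first.
  move=> i le_i; apply: big1 => j _; apply: big1 => k _.
  by rewrite pad_mx_out // !mul0r.
apply: eq_bigr => i _; rewrite (sum_widen_ord le_m2n2); last first.
  move=> j le_j; apply: big1 => k _.
  by rewrite [pad_mx n2 B b j]pad_mx_out // mulr0 !mul0r.
apply: eq_bigr => j _; rewrite (sum_widen_ord le_m3n3); last first.
  by move=> k le_k; rewrite [pad_mx n3 C c k]pad_mx_out // mulr0 mul0r.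
by apply: eq_bigr => k _; rewrite !pad_mx_widen.
Qed.

End Corner.

Theorem lemma4p1 (R : realType) (m1 m2 m3 n1 n2 n3 : nat) :
  (m1 <= n1)%N -> (m2 <= n2)%N -> (m3 <= n3)%N ->
  forall rm rn : nat,
    min_typical_subrank R m1 m2 m3 rm ->
    min_typical_subrank R n1 n2 n3 rn ->
    (rm <= rn)%N.
Proof.
move=> h1 h2 h3 rm rn [_ rm_min] [[U [/tensor_openE oU [T0 UT0] subrank_U]] _].
pose B : set (tensor R m1 m2 m3) := replace_corner T0 @^-1` U.
have oB : open B by apply: (continuousP _).1 oU; exact: continuous_replace_corner.
have B0 : B (corner h1 h2 h3 T0) by rewrite /B /= replace_corner_corner.
have subrank_B S r : B S -> restricts_to_unit S r -> (r <= rn)%N.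
  move=> BS; rewrite -(corner_replace h1 h2 h3 T0 S) => /restricts_to_unit_corner.
  exact: (subrank_U _ BS).2.
have [k typical_k le_krn] :=
  exists_typical_subrank_le oB (ex_intro _ _ B0) subrank_B.
exact: leq_trans (rm_min k typical_k) le_krn.
Qed.
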